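(* Let $X$ be a Baire space, $Y$ a first countable topological space, $(Z,d)$ a metric space and $f:X\times Y\to Z$ a mapping. Suppose that for each $x\in X$, $f_x$ is continuous and $f^y$ is quasicontinuous at $x$ for every $y$ in a dense set $D_x\subset Y$. Then for each $y\in Y$ there is a residual set $R_y\subset X$ such that $f$ is continuous at every point of $R_y\times\{y\}$.
   Context: $f_x(y)=f^y(x)=f(x,y)$. A mapping $g:X\to Z$ is quasicontinuous at $a$ if for each neighborhood $U$ of $a$ and each neighborhood $W$ of $g(a)$ there is an open $O$ with $\emptyset\ne O\subset U$ and $g(O)\subset W$. Residual means containing a countable intersection of dense open sets. *)

From Stdlib Require Import Reals.
From Stdlib Require Import Lra.
Open Scope R_scope.

Definition set (T : Type) := T -> Prop.
Definition subset {T} (A B : set T) := forall x, A x -> B x.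

Record topology (T : Type) := Topology {
  open : set T -> Prop;
  open_full : open (fun _ => True);
  open_inter : forall A B, open A -> open B -> open (fun x => A x /\ B x);
  open_union : forall (I : Type) (F : I -> set T),
      (forall i, open (F i)) -> open (fun x => exists i, F i x)
}.
Arguments open {T} t A.

Definition nbhd {T} (t : topology T) (a : T) (N : set T) :=
  exists O, open t O /\ O a /\ subset O N.

Definition dense {T} (t : topology T) (S : set T) :=
  forall O, open t O -> (exists x, O x) -> exists x, O x /\ S x.

Definition baire_space {T} (t : topology T) :=
  forall G : nat -> set T, (forall n, open t (G n) /\ dense t (G n)) ->
    dense t (fun x => forall n, G n x).

Definition first_countable {T} (t : topology T) :=
  forall y, exists B : nat -> set T,
    (forall n, open t (B n) /\ B n y) /\
    (forall U, open t U -> U y -> exists n, subset (B n) U).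

Definition residual {T} (t : topology T) (R : set T) :=
  exists G : nat -> set T, (forall n, open t (G n) /\ dense t (G n)) /\
    (forall x, (forall n, G n x) -> R x).

Definition continuous_at {S T} (s : topology S) (t : topology T) (g : S -> T) (a : S) :=
  forall W, nbhd t (g a) W -> exists U, nbhd s a U /\ forall x, U x -> W (g x).

Definition continuous {S T} (s : topology S) (t : topology T) (g : S -> T) :=
  forall a, continuous_at s t g a.

Definition quasicontinuous_at {S T} (s : topology S) (t : topology T) (g : S -> T) (a : S) :=
  forall U W, nbhd s a U -> nbhd t (g a) W ->
    exists O, open s O /\ (exists x, O x) /\ subset O U /\ (forall x, O x -> W (g x)).

Record metric (Z : Type) := Metric {
  dist : Z -> Z -> R;
  dist_ge0 : forall x y, 0 <= dist x y;
  dist_eq0 : forall x y, dist x y = 0 <-> x = y;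
  dist_sym : forall x y, dist x y = dist y x;
  dist_tri : forall x y z, dist x z <= dist x y + dist y z
}.
Arguments dist {Z} m _ _.

Definition metric_open {Z} (d : metric Z) (W : set Z) :=
  forall z, W z -> exists eps, 0 < eps /\ forall w, dist d z w < eps -> W w.

Lemma metric_open_full {Z} (d : metric Z) : metric_open d (fun _ => True).
Proof. intros z _; exists 1; split; [lra|auto]. Qed.

Lemma metric_open_inter {Z} (d : metric Z) A B :
  metric_open d A -> metric_open d B -> metric_open d (fun x => A x /\ B x).
Proof.
  intros HA HB z [Az Bz].
  destruct (HA z Az) as [e1 [He1 H1]]; destruct (HB z Bz) as [e2 [He2 H2]].
  exists (Rmin e1 e2); split; [apply Rmin_pos; auto|].
  intros w Hw; split; [apply H1|apply H2];
    eapply Rlt_le_trans; eauto; [apply Rmin_l|apply Rmin_r].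
Qed.

Lemma metric_open_union {Z} (d : metric Z) (I : Type) (F : I -> set Z) :
  (forall i, metric_open d (F i)) -> metric_open d (fun x => exists i, F i x).
Proof.
  intros HF z [i Hi]; destruct (HF i z Hi) as [e [He H]].
  exists e; split; auto; intros w Hw; exists i; auto.
Qed.

Definition metric_topology {Z} (d : metric Z) : topology Z :=
  @Topology Z (metric_open d) (metric_open_full d) (@metric_open_inter Z d)
    (@metric_open_union Z d).

Definition prod_open {X Y} (tx : topology X) (ty : topology Y) (W : set (X * Y)) :=
  forall p, W p -> exists U V, open tx U /\ open ty V /\ U (fst p) /\ V (snd p) /\
    forall q, U (fst q) -> V (snd q) -> W q.

Lemma prod_open_full {X Y} (tx : topology X) (ty : topology Y) :
  prod_open tx ty (fun _ => True).
Proof.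
  intros p _; exists (fun _ => True), (fun _ => True);
  repeat split; auto using open_full.
Qed.

Lemma prod_open_inter {X Y} (tx : topology X) (ty : topology Y) A B :
  prod_open tx ty A -> prod_open tx ty B -> prod_open tx ty (fun x => A x /\ B x).
Proof.
  intros HA HB p [Ap Bp].
  destruct (HA p Ap) as [U1 [V1 [a1 [b1 [c1 [e1 H1]]]]]].
  destruct (HB p Bp) as [U2 [V2 [a2 [b2 [c2 [e2 H2]]]]]].
  exists (fun x => U1 x /\ U2 x), (fun y => V1 y /\ V2 y).
  repeat split; auto using open_inter; [apply H1|apply H2]; tauto.
Qed.

Lemma prod_open_union {X Y} (tx : topology X) (ty : topology Y) (I : Type) F :
  (forall i : I, prod_open tx ty (F i)) -> prod_open tx ty (fun x => exists i, F i x).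
Proof.
  intros HF p [i Hi]; destruct (HF i p Hi) as [U [V [? [? [? [? H]]]]]].
  exists U, V; repeat split; auto; intros q Hq1 Hq2; exists i; auto.
Qed.

Definition prod_topology {X Y} (tx : topology X) (ty : topology Y) : topology (X * Y) :=
  @Topology (X * Y) (prod_open tx ty) (prod_open_full tx ty) (@prod_open_inter X Y tx ty)
    (@prod_open_union X Y tx ty).

(* Fix y with a countable local base (B n).  Call an open set O of X "eps-flat"
   if f stays within eps of a constant on O x B n for some n.  For each eps the
   union G eps of the eps-flat sets is open, and it is dense: on a nonempty open
   W the sets F n = {x | f (x, .) varies by < eps on B n} cover W (continuity of
   the sections f_x), so by the Baire property some F n is dense in a nonempty
   open V of W.  Quasicontinuity of f^y0 at a point of F n, for y0 in B n and in
   the dense set D_x, yields a flat O inside V, once every value f (x1, y1) on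
   O x B n is approximated by a value at a point of F n using continuity of
   f_x1 and quasicontinuity of f^y2 at x1.  Then f is continuous at (x, y) for
   every x in the residual set of all G (1 / (k + 1)). *)
From Pilot Require Import Defs.
From Stdlib Require Import Reals Lra Classical.
Open Scope R_scope.

Lemma dist_lt_trans {Z} (d : metric Z) a b c r s :
  Defs.dist d a b < r -> Defs.dist d b c < s -> Defs.dist d a c < r + s.
Proof. intros Hab Hbc; pose proof (Defs.dist_tri _ d a b c); lra. Qed.

Lemma dist_lt_sym {Z} (d : metric Z) a b r :
  Defs.dist d a b < r -> Defs.dist d b a < r.
Proof. now rewrite Defs.dist_sym. Qed.

Lemma open_nbhd {T} (t : topology T) (O : set T) a : open t O -> O a -> nbhd t a O.
Proof. intros HO Oa; exists O; repeat split; auto; intros x Ox; exact Ox. Qed.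

Lemma ball_open {Z} (d : metric Z) c r :
  metric_open d (fun w => Defs.dist d c w < r).
Proof.
  intros z Hz; exists (r - Defs.dist d c z); split; [lra|].
  intros w Hw; pose proof (Defs.dist_tri _ d c z w); lra.
Qed.

Lemma ball_nbhd {Z} (d : metric Z) c r : 0 < r ->
  nbhd (metric_topology d) c (fun w => Defs.dist d c w < r).
Proof.
  intros Hr; apply open_nbhd; [exact (ball_open d c r)|].
  cbn; rewrite (proj2 (Defs.dist_eq0 _ d c c) eq_refl); exact Hr.
Qed.

Lemma open_union_sig {T} (t : topology T) (P : set T -> Prop) :
  (forall O, P O -> open t O) -> open t (fun x => exists i : {O | P O}, proj1_sig i x).
Proof. intros HP; apply open_union; intros [O PO]; exact (HP O PO). Qed.

Lemma inv_INR_S_lt eps : 0 < eps -> exists N, / (INR N + 1) < eps.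
Proof.
  intros Heps; destruct (archimed_cor1 eps Heps) as [N [HN HN0]]; exists N.
  apply lt_INR in HN0; simpl in HN0.
  apply Rlt_trans with (/ INR N); [apply Rinv_lt_contravar; nra | exact HN].
Qed.

Definition dense_in {T} (t : topology T) (V S : set T) :=
  forall O, open t O -> subset O V -> (exists x, O x) -> exists x, O x /\ S x.

Definition local_base {T} (t : topology T) (y : T) (B : nat -> set T) :=
  (forall n, open t (B n) /\ B n y) /\
  (forall U, open t U -> U y -> exists n, subset (B n) U).

Lemma baire_somewhere_dense {T} (t : topology T) (W : set T) (F : nat -> set T) :
  baire_space t -> open t W -> (exists x, W x) -> (forall x, W x -> exists n, F n x) ->
  exists n V, open t V /\ (exists x, V x) /\ subset V W /\ dense_in t V (F n).
Proof.
  intros Hbaire HW [w Ww] Hcover; apply NNPP; intros Hnone.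
  (* E n is the largest open set on which W and F n are disjoint. *)
  set (E := fun n x =>
    exists i : {O | open t O /\ forall z, O z -> W z -> ~ F n z}, proj1_sig i x).
  assert (E_dense : forall n, dense t (E n)).
  { intros n O HO [o Oo].
    destruct (classic (exists z, O z /\ W z)) as [OW | OW].
    - apply NNPP; intros HOE; apply Hnone; exists n, (fun z => O z /\ W z).
      split; [now apply open_inter|]; split; [exact OW|].
      split; [intros z [_ Wz]; exact Wz|].
      intros O' HO' HO'OW [o' O'o']; apply NNPP; intros HF; apply HOE.
      exists o'; split; [exact (proj1 (HO'OW o' O'o'))|].
      refine (ex_intro _ (exist _ O' (conj HO' _)) O'o').
      intros z O'z _ Fz; apply HF; now exists z.
    - exists o; split; [exact Oo|].
      refine (ex_intro _ (exist _ O (conj HO _)) Oo).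
      intros z Oz Wz _; apply OW; now exists z. }
  assert (E_open : forall n, open t (E n)).
  { intros n; apply open_union_sig; tauto. }
  destruct (Hbaire E (fun n => conj (E_open n) (E_dense n)) W HW (ex_intro _ w Ww))
    as [x [Wx Ex]].
  destruct (Hcover x Wx) as [m Fx]; destruct (Ex m) as [i Ox].
  exact (proj2 (proj2_sig i) x Ox Wx Fx).
Qed.

Lemma local_base_continuous_at {Y Z} (tY : topology Y) (d : metric Z) (g : Y -> Z)
  y B e :
  local_base tY y B -> continuous_at tY (metric_topology d) g y -> 0 < e ->
  exists n, forall y', B n y' -> Defs.dist d (g y) (g y') < e.
Proof.
  intros [_ Hbase] Hg He.
  destruct (Hg _ (ball_nbhd d (g y) e He)) as [U [[O [HO [Oy HOU]]] HU]].
  destruct (Hbase O HO Oy) as [n Hn]; exists n.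
  intros y' By'; apply HU, HOU, Hn, By'.
Qed.

Section SeparatelyQuasicontinuous.

Variables (X Y Z : Type) (tX : topology X) (tY : topology Y) (d : metric Z).
Variable f : X * Y -> Z.

Hypothesis f_continuous_in_y :
  forall x, continuous tY (metric_topology d) (fun y => f (x, y)).
Hypothesis f_quasicontinuous_in_x :
  forall x, exists Dx : set Y, dense tY Dx /\
    forall y, Dx y -> quasicontinuous_at tX (metric_topology d) (fun x' => f (x', y)) x.

Lemma approx_by_dense_points (S V O : set X) (A : set Y) x1 y1 e :
  0 < e -> dense_in tX V S -> open tX O -> subset O V -> O x1 ->
  open tY A -> A y1 ->
  exists x2 y2, O x2 /\ S x2 /\ A y2 /\ Defs.dist d (f (x1, y1)) (f (x2, y2)) < e + e.
Proof.
  intros He HS HO HOV Ox1 HA Ay1.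
  destruct (f_quasicontinuous_in_x x1) as [D [HD Hq]].
  destruct (f_continuous_in_y x1 y1 _ (ball_nbhd d (f (x1, y1)) e He))
    as [U [[O1 [HO1 [O1y1 HO1U]]] HU]].
  destruct (HD (fun z => O1 z /\ A z) (open_inter _ _ _ _ HO1 HA)
              (ex_intro _ y1 (conj O1y1 Ay1))) as [y2 [[O1y2 Ay2] Dy2]].
  destruct (Hq y2 Dy2 O _ (open_nbhd tX O x1 HO Ox1) (ball_nbhd d (f (x1, y2)) e He))
    as [O2 [HO2 [O2ne [HO2O HO2ball]]]].
  destruct (HS O2 HO2 (fun z O2z => HOV z (HO2O z O2z)) O2ne) as [x2 [O2x2 Sx2]].
  exists x2, y2; repeat split; auto.
  apply dist_lt_trans with (f (x1, y2)); [apply HU, HO1U, O1y2 | apply HO2ball, O2x2].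
Qed.

Section FlatBox.

Variables (y : Y) (A : set Y) (e : R).
Hypotheses (A_open : open tY A) (A_y : A y) (e_gt0 : 0 < e).

Definition flat_in_y (x : X) :=
  forall y', A y' -> Defs.dist d (f (x, y)) (f (x, y')) < e.

Lemma flat_box (V : set X) :
  open tX V -> (exists x, V x) -> dense_in tX V flat_in_y ->
  exists O c, open tX O /\ (exists x, O x) /\ subset O V /\
    forall x1 y1, O x1 -> A y1 -> Defs.dist d (f (x1, y1)) c < 6 * e.
Proof.
  intros HV Vne HS.
  destruct (HS V HV (fun z Vz => Vz) Vne) as [x0 [Vx0 Sx0]].
  destruct (f_quasicontinuous_in_x x0) as [D [HD Hq]].
  destruct (HD A A_open (ex_intro _ y A_y)) as [y0 [Ay0 Dy0]].
  destruct (Hq y0 Dy0 V _ (open_nbhd tX V x0 HV Vx0) (ball_nbhd d (f (x0, y0)) e e_gt0))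
    as [O [HO [One [HOV HOball]]]].
  exists O, (f (x0, y)); repeat split; auto.
  intros x1 y1 Ox1 Ay1.
  destruct (approx_by_dense_points flat_in_y V O A x1 y1 e e_gt0 HS HO HOV Ox1 A_open Ay1)
    as [x2 [y2 [Ox2 [Sx2 [Ay2 Hx1x2]]]]].
  replace (6 * e) with (e + e + e + e + e + e) by ring.
  apply dist_lt_trans with (f (x0, y0)); [|apply dist_lt_sym, Sx0, Ay0].
  apply dist_lt_trans with (f (x2, y0)); [|apply dist_lt_sym, HOball, Ox2].
  apply dist_lt_trans with (f (x2, y)); [|apply Sx2, Ay0].
  apply dist_lt_trans with (f (x2, y2)); [exact Hx1x2 | apply dist_lt_sym, Sx2, Ay2].
Qed.

End FlatBox.

Section FlatUnion.

Variables (y : Y) (B : nat -> set Y).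
Hypothesis B_base : local_base tY y B.

Definition flat_union (eps : R) : set X :=
  fun x => exists i : {O : set X | open tX O /\ exists n c,
                         forall x1 y1, O x1 -> B n y1 -> Defs.dist d (f (x1, y1)) c < eps},
    proj1_sig i x.

Lemma open_flat_union eps : open tX (flat_union eps).
Proof. apply open_union_sig; tauto. Qed.

Lemma dense_flat_union eps :
  baire_space tX -> 0 < eps -> dense tX (flat_union eps).
Proof.
  intros Hbaire Heps W HW Wne.
  assert (He : 0 < eps / 6) by lra.
  destruct (baire_somewhere_dense tX W (fun n => flat_in_y y (B n) (eps / 6)) Hbaire HW Wne)
    as [n [V [HV [Vne [HVW HS]]]]].
  { intros x _; exact (local_base_continuous_at tY d _ y B _ B_base
                         (f_continuous_in_y x y) He). }
  destruct (proj1 B_base n) as [HBn Bny].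
  destruct (flat_box y (B n) (eps / 6) HBn Bny He V HV Vne HS)
    as [O [c [HO [[x Ox] [HOV Hflat]]]]].
  exists x; split; [exact (HVW x (HOV x Ox))|].
  refine (ex_intro _ (exist _ O (conj HO (ex_intro _ n (ex_intro _ c _)))) Ox).
  intros x1 y1 Ox1 By1; specialize (Hflat x1 y1 Ox1 By1); lra.
Qed.

Lemma continuous_at_flat_union x :
  (forall k, flat_union (/ (INR k + 1)) x) ->
  continuous_at (prod_topology tX tY) (metric_topology d) f (x, y).
Proof.
  intros Hx W [OW [HOW [OWf HOWW]]].
  destruct (HOW _ OWf) as [e0 [He0 Hball]].
  destruct (inv_INR_S_lt (e0 / 2)) as [k Hk]; [lra|].
  destruct (Hx k) as [[O [HO [n [c Hflat]]]] Ox]; simpl in Ox.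
  destruct (proj1 B_base n) as [HBn Bny].
  exists (fun p => O (fst p) /\ B n (snd p)); split.
  - apply open_nbhd; [|split; assumption].
    intros p [Op Bp]; exists O, (B n); repeat split; auto.
  - intros [x1 y1] [Ox1 By1]; apply HOWW, Hball.
    replace e0 with (e0 / 2 + e0 / 2) by field.
    simpl in Ox1, By1.
    apply dist_lt_trans with c; [|apply dist_lt_sym];
      eapply Rlt_trans; (apply Hflat; assumption) || exact Hk.
Qed.

End FlatUnion.

End SeparatelyQuasicontinuous.

Theorem theorem4p1 (X Y Z : Type) (tX : topology X) (tY : topology Y) (d : metric Z)
  (f : X * Y -> Z) :
  baire_space tX ->
  first_countable tY ->
  (forall x : X,
     continuous tY (metric_topology d) (fun y => f (x, y)) /\
     exists Dx : set Y, dense tY Dx /\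
       forall y, Dx y -> quasicontinuous_at tX (metric_topology d) (fun x' => f (x', y)) x) ->
  forall y : Y, exists Ry : set X, residual tX Ry /\
    forall x, Ry x -> continuous_at (prod_topology tX tY) (metric_topology d) f (x, y).
Proof.
  intros Hbaire Hfc Hf y.
  destruct (Hfc y) as [B B_base].
  assert (f_cont : forall x, continuous tY (metric_topology d) (fun y => f (x, y)))
    by (intros x; apply Hf).
  assert (f_quasi := fun x => proj2 (Hf x)).
  set (G k := flat_union X Y Z tX d f B (/ (INR k + 1))).
  exists (fun x => forall k, G k x); split.
  - exists G; split; [|auto].
    intros k; split; [apply open_flat_union|].
    eapply dense_flat_union; eauto using RinvN_pos.
  - intros x Hx; eapply continuous_at_flat_union; eauto.
Qed.
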